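(* Let $A=(A,\wedge,\vee,\cdot,\to,1)$ be a $\mathsf{DLCMI}$ whose lattice reduct has a least element $0$, let $n$ be a natural number, and let $\gamma:A\to A$ be a function. Then $\gamma$ satisfies, for all $a,b\in A$, (g1) $a\vee\neg(\gamma(a))^n\le\gamma(a)$ and (g2) $\gamma(a)\le a\vee\neg b^n\vee b$ (equivalently, $\gamma(a)=\min\{b\in A: a\vee\neg b^n\le b\}$ for all $a$), if and only if $\gamma$ satisfies, for all $a,b\in A$, (g3) $\neg(\gamma(0))^n\le\gamma(0)$, (g4) $\gamma(0)\le b\vee\neg b^n$, and (g5) $\gamma(a)=a\vee\gamma(0)$. In particular such a function $\gamma$ is a polynomial function on $A$.
   Context: An algebra $(A,\wedge,\vee,\cdot,\to,1)$ of type $(2,2,2,2,0)$ is a $\mathsf{DLCMI}$ if for all $a,b,c\in A$: (1) $(A,\wedge,\vee)$ is a distributive lattice; (2) $1$ is its largest element; (3) $(A,\cdot,1)$ is a commutative monoid; (4) $(a\to b)\wedge(a\to c)=a\to(b\wedge c)$; (5) $(a\to c)\wedge(b\to c)=(a\vee b)\to c$; (6) $a\to a=1$; (7) $(a\vee b)\cdot c=(a\cdot c)\vee(b\cdot c)$; (8) $(a\to b)\cdot(b\to c)\le a\to c$; (9) $a\to b\le (a\cdot c)\to(b\cdot c)$. Notation: $\neg x=x\to 0$; $x^0=1$, $x^m=x\cdot x^{m-1}$. *)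

From mathcomp Require Import all_boot all_order.
Set Implicit Arguments. Unset Strict Implicit. Unset Printing Implicit Defensive.
Import Order.Theory.
Local Open Scope order_scope.

(* A DLCMI whose lattice reduct is bounded: the distributive lattice with top
   1 (= \top) and least element 0 (= \bot) is the mathcomp structure
   [tbDistrLatticeType]; the monoid product [mul] and implication [imp] are
   extra operations satisfying axioms (3)-(9). *)
Definition is_DLCMI (d : Order.disp_t) (A : tbDistrLatticeType d)
    (mul imp : A -> A -> A) : Prop :=
  (   (* (3) commutative monoid with unit 1 = \top *)
      (forall a b c : A, mul a (mul b c) = mul (mul a b) c) /\
      (forall a b : A, mul a b = mul b a) /\
      (forall a : A, mul \top a = a) /\
      (* (4) *) (forall a b c : A, imp a b `&` imp a c = imp a (b `&` c)) /\
      (* (5) *) (forall a b c : A, imp a c `&` imp b c = imp (a `|` b) c) /\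
      (* (6) *) (forall a : A, imp a a = \top) /\
      (* (7) *) (forall a b c : A, mul (a `|` b) c = mul a c `|` mul b c) /\
      (* (8) *) (forall a b c : A, mul (imp a b) (imp b c) <= imp a c)
    /\ (* (9) *) (forall a b c : A, imp a b <= imp (mul a c) (mul b c))).

Fixpoint mpow (d : Order.disp_t) (A : tbDistrLatticeType d)
    (mul : A -> A -> A) (x : A) (m : nat) : A :=
  match m with
  | 0 => \top
  | m'.+1 => mul x (mpow mul x m')
  end.

Definition lneg (d : Order.disp_t) (A : tbDistrLatticeType d)
    (imp : A -> A -> A) (x : A) : A := imp x \bot.

From mathcomp Require Import all_boot all_order.
Import Order.Theory.
Local Open Scope order_scope.
Set Implicit Arguments. Unset Strict Implicit.

(* If [gamma a] is the least [b] above [a] with [~ b^n <= b], then [c := gamma 0]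
   is the least [b] with [~ b^n <= b]; since [~ b^n <= b] is equivalent to
   [c <= b], [gamma a] is the least [b] above both [a] and [c], namely
   [a `|` c].  Conversely [a `|` c] satisfies (g1) because [x |-> ~ x^n] is
   antitone, which needs only axioms (3), (5) and (7). *)

Section DLCMI.

Variables (d : Order.disp_t) (A : tbDistrLatticeType d) (mul imp : A -> A -> A).
Hypothesis HA : is_DLCMI mul imp.
Variable n : nat.

Lemma mulC (x y : A) : mul x y = mul y x.
Proof. by case: HA => _ []. Qed.

Lemma mulUl (x y z : A) : mul (x `|` y) z = mul x z `|` mul y z.
Proof. by case: HA => _ [_ [_ [_ [_ [_ []]]]]]. Qed.

Lemma impUl (x y z : A) : imp x z `&` imp y z = imp (x `|` y) z.
Proof. by case: HA => _ [_ [_ [_ []]]]. Qed.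

Lemma mul_monol (x x' y : A) : x <= x' -> mul x y <= mul x' y.
Proof. by move=> /join_r <-; rewrite mulUl leUl. Qed.

Lemma mul_monor (x y y' : A) : y <= y' -> mul x y <= mul x y'.
Proof. by move=> le_yy'; rewrite ![mul x _]mulC mul_monol. Qed.

Lemma mpow_mono (x x' : A) (m : nat) : x <= x' -> mpow mul x m <= mpow mul x' m.
Proof.
move=> le_xx'; elim: m => [|m IHm] //=.
exact: le_trans (mul_monol _ le_xx') (mul_monor _ IHm).
Qed.

Lemma lneg_anti (x x' : A) : x <= x' -> lneg imp x' <= lneg imp x.
Proof. by move=> /join_r <-; rewrite /lneg -impUl leIl. Qed.

Local Notation negpow x := (lneg imp (mpow mul x n)).

Lemma negpow_anti (x x' : A) : x <= x' -> negpow x' <= negpow x.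
Proof. by move=> le_xx'; apply/lneg_anti/mpow_mono. Qed.

Section MinimalClosure.

Variable gamma : A -> A.
Hypothesis gammaP : forall a b : A,
  a `|` negpow (gamma a) <= gamma a /\ gamma a <= a `|` negpow b `|` b.

Lemma min_closure_bot :
  negpow (gamma \bot) <= gamma \bot /\
  forall b : A, gamma \bot <= b `|` negpow b.
Proof.
split=> [|b].
  by have [+ _] := gammaP \bot \bot; rewrite leUx => /andP[].
by have [_] := gammaP \bot b; rewrite join0x joinC.
Qed.

Lemma min_closure_join (a : A) : gamma a = a `|` gamma \bot.
Proof.
have [closed_g0 min_g0] := min_closure_bot.
have [+ _] := gammaP a a; rewrite leUx => /andP[le_a_ga closed_ga].
apply/le_anti/andP; split.
  have [_] := gammaP a (gamma \bot).
  by move/le_trans; apply; rewrite -joinA leU2 // leUx closed_g0 lexx.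
by rewrite leUx le_a_ga (le_trans (min_g0 (gamma a))) // leUx closed_ga lexx.
Qed.

End MinimalClosure.

Lemma join_min_closure (c : A) :
    negpow c <= c -> (forall b : A, c <= b `|` negpow b) ->
  forall a b : A, a `|` negpow (a `|` c) <= a `|` c /\
                  a `|` c <= a `|` negpow b `|` b.
Proof.
move=> closed_c min_c a b; split.
  by rewrite leU2 // (le_trans _ closed_c) // negpow_anti // leUr.
by rewrite -joinA leU2 // joinC.
Qed.

End DLCMI.

Theorem lemma4p11 (d : Order.disp_t) (A : tbDistrLatticeType d)
    (mul imp : A -> A -> A) (HA : is_DLCMI mul imp)
    (n : nat) (gamma : A -> A) :
  ((forall a b : A,
       a `|` lneg imp (mpow mul (gamma a) n) <= gamma a /\
       gamma a <= a `|` lneg imp (mpow mul b n) `|` b)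
   <->
   (forall a b : A,
       [/\ lneg imp (mpow mul (gamma \bot) n) <= gamma \bot,
           gamma \bot <= b `|` lneg imp (mpow mul b n)
         & gamma a = a `|` gamma \bot]))
  /\
  ((forall a b : A,
       a `|` lneg imp (mpow mul (gamma a) n) <= gamma a /\
       gamma a <= a `|` lneg imp (mpow mul b n) `|` b) ->
   exists c : A, forall a : A, gamma a = a `|` c).
Proof.
split; last first.
  by move=> gammaP; exists (gamma \bot) => a; exact: min_closure_join gammaP a.
split=> gammaP a b.
  have [closed_g0 min_g0] := min_closure_bot gammaP.
  by split; [| apply: min_g0 | exact: min_closure_join gammaP a].
have [closed_g0 _ ->] := gammaP a b.
apply: (join_min_closure HA closed_g0) => b'.
by have [] := gammaP a b'.
Qed.
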